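(* Let $L=\bigoplus_{i\in\mathbb{Z}/n\mathbb{Z}}L_i$ be a $(\mathbb{Z}/n\mathbb{Z})$-graded Lie algebra and let $T$ be a homogeneous ideal of $L$ that has only $e$ non-trivial components $T\cap L_i$. Then at most $e^2$ of the components $L_i$ of $L$ do not centralize $T$ (i.e. satisfy $[L_i,T]\neq 0$).
   Context: A $(\mathbb{Z}/n\mathbb{Z})$-graded Lie algebra is $L=\bigoplus_{i=0}^{n-1}L_i$ with $[L_i,L_j]\subseteq L_{i+j \bmod n}$. A subspace $T$ is homogeneous if $T=\bigoplus_i (T\cap L_i)$. *)

From mathcomp Require Import all_boot all_order all_algebra.
Set Implicit Arguments. Unset Strict Implicit. Unset Printing Implicit Defensive.
Import GRing.Theory.
Local Open Scope ring_scope.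

Section LieDefs.
Variables (K : fieldType) (V : lmodType K).

Definition is_lie_bracket (br : V -> V -> V) : Prop :=
  [/\ (forall a x y z, br (a *: x + y) z = a *: br x z + br y z),
      (forall a x y z, br z (a *: x + y) = a *: br z x + br z y),
      (forall x, br x x = 0) &
      (forall x y z, br x (br y z) + br y (br z x) + br z (br x y) = 0)].

Definition is_subspace (S : V -> Prop) : Prop :=
  [/\ S 0, (forall x y, S x -> S y -> S (x + y)) &
      (forall a x, S x -> S (a *: x))].

(* (Z/mZ)-grading, m = n.+1, indices 'I_n.+1 with addition mod n.+1:
   V = (+)_i Lc i as a direct sum of subspaces, and [Lc i, Lc j] <= Lc (i+j). *)
Definition is_Zn_grading (n : nat) (br : V -> V -> V) (Lc : 'I_n.+1 -> V -> Prop)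
  : Prop :=
  [/\ (forall i, is_subspace (Lc i)),
      (forall v, exists f : 'I_n.+1 -> V,
          (forall i, Lc i (f i)) /\ v = \sum_i f i),
      (forall f : 'I_n.+1 -> V, (forall i, Lc i (f i)) ->
          \sum_i f i = 0 -> forall i, f i = 0) &
      (forall i j x y, Lc i x -> Lc j y -> Lc (i + j)%R (br x y))].

Definition is_homogeneous (n : nat) (Lc : 'I_n.+1 -> V -> Prop) (T : V -> Prop)
  : Prop :=
  is_subspace T /\
  forall v, T v -> exists f : 'I_n.+1 -> V,
      (forall i, Lc i (f i) /\ T (f i)) /\ v = \sum_i f i.

Definition is_ideal (br : V -> V -> V) (T : V -> Prop) : Prop :=
  is_subspace T /\ forall x t, T t -> T (br x t).

End LieDefs.

From mathcomp Require Import all_boot all_order all_algebra.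
Import GRing.Theory.
Local Open Scope ring_scope.

(* If [L_i, T] <> 0, pick x in L_i and a homogeneous t in T ∩ L_j with
   [x, t] <> 0; since T is an ideal, [x, t] is a nonzero element of
   T ∩ L_(i+j). Hence i = (i + j) - j is a difference of two of the e indices
   where T is nontrivial, and there are at most e^2 such differences. *)

Lemma leq_imset2_card (aT aT2 rT : finType) (f : aT -> aT2 -> rT)
    (A : {set aT}) (B : {set aT2}) :
  (#|f @2: (A, B)| <= #|A| * #|B|)%N.
Proof. by rewrite curry_imset2X -cardsX leq_imset_card. Qed.

Lemma sumr_neq0P {M : nmodType} {I : finType} {F : I -> M} :
  \sum_i F i != 0 -> exists i, F i != 0.
Proof.
move=> /eqP sumF_neq0; apply/existsP; apply: contraT; rewrite negb_exists.
by move=> /forallP F0; case: sumF_neq0; apply: big1 => i _; apply/eqP/negPn.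
Qed.

Section RightLinearBracket.
Variables (K : fieldType) (V : lmodType K) (br : V -> V -> V).
Hypothesis br_linr : forall a x y z, br z (a *: x + y) = a *: br z x + br z y.

Lemma br_addr z : {morph br z : x y / x + y}.
Proof. by move=> x y; rewrite -[x]scale1r br_linr !scale1r. Qed.

Lemma br0r z : br z 0 = 0.
Proof. by apply: (addrI (br z 0)); rewrite -br_addr !addr0. Qed.

Lemma br_sumr z (I : Type) (r : seq I) (P : pred I) (F : I -> V) :
  br z (\sum_(i <- r | P i) F i) = \sum_(i <- r | P i) br z (F i).
Proof. exact: (big_morph (br z) (br_addr z) (br0r z)). Qed.

End RightLinearBracket.

Section GradedIdeal.
Set Implicit Arguments.
Unset Strict Implicit.
Variables (K : fieldType) (V : lmodType K) (br : V -> V -> V).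
Variables (G : finZmodType) (Lc : G -> V -> Prop) (T : V -> Prop).
Hypothesis br_linr : forall a x y z, br z (a *: x + y) = a *: br z x + br z y.
Hypothesis br_graded :
  forall i j x y, Lc i x -> Lc j y -> Lc (i + j) (br x y).
Hypothesis T_homogeneous : forall t, T t ->
  exists f : G -> V, (forall i, Lc i (f i) /\ T (f i)) /\ t = \sum_i f i.
Hypothesis T_ideal : forall x t, T t -> T (br x t).

Definition nontrivial_component (i : G) : Prop :=
  exists t, T t /\ Lc i t /\ t <> 0.

Lemma bracket_homogeneous_nonzero i x t : Lc i x -> T t -> br x t <> 0 ->
  exists j, nontrivial_component j /\ nontrivial_component (i + j).
Proof.
move=> Lx Tt /eqP brxt_neq0.
have [f [Lf t_sum]] := T_homogeneous Tt.
rewrite t_sum br_sumr // in brxt_neq0.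
have [j /eqP brxfj_neq0] := sumr_neq0P brxt_neq0.
have [Lfj Tfj] := Lf j.
exists j; split.
- exists (f j); split=> //; split=> // fj0.
  by apply: brxfj_neq0; rewrite fj0 br0r.
- exists (br x (f j)); split; first exact: T_ideal.
  by split; first exact: br_graded.
Qed.

Lemma noncentralizing_sub_diffset (S C : {set G}) :
  (forall i, i \in S <-> nontrivial_component i) ->
  (forall i, i \in C <-> exists x t, Lc i x /\ T t /\ br x t <> 0) ->
  C \subset [set u - v | u in S, v in S].
Proof.
move=> memS memC; apply/subsetP => i /memC [x [t [Lx [Tt brxt_neq0]]]].
have [j [/memS Sj /memS Sij]] := bracket_homogeneous_nonzero Lx Tt brxt_neq0.
by rewrite -(addrK j i); apply: imset2_f.
Qed.

End GradedIdeal.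

Theorem lemma7 (K : fieldType) (V : lmodType K) (br : V -> V -> V) (n : nat)
  (Lc : 'I_n.+1 -> V -> Prop) (T : V -> Prop)
  (S C : {set 'I_n.+1}) (e : nat) :
  is_lie_bracket br ->
  is_Zn_grading br Lc ->
  is_homogeneous Lc T ->
  is_ideal br T ->
  (forall i, i \in S <-> exists t, T t /\ Lc i t /\ t <> 0) ->
  #|S| = e ->
  (forall i, i \in C <-> exists x t, Lc i x /\ T t /\ br x t <> 0) ->
  (#|C| <= e ^ 2)%N.
Proof.
move=> [_ br_linr _ _] [_ _ _ br_graded] [_ T_homogeneous] [_ T_ideal].
move=> memS <- memC.
have C_sub := noncentralizing_sub_diffset br_linr br_graded T_homogeneous
  T_ideal memS memC.
by rewrite (leq_trans (subset_leq_card C_sub)) // expnS expn1 leq_imset2_card.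
Qed.
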